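(* Let $G$ be a planar PCC graph, let $v$ be a vertex and let $\sigma$ be a face that appears in the multiset $F(v)$ with multiplicity $2$. Then $7\le|\sigma|\le 11$.
   Context: $G$ is a finite simple connected graph 2-cell embedded in the sphere. For a vertex $v$, $F(v)$ is the multiset of faces incident to $v$, one entry for each corner of $v$ (so a face touching $v$ at two corners appears twice). $|\sigma|$ is the length of the boundary walk of $\sigma$, and $K(v)=1-\frac{\deg(v)}{2}+\sum_{\sigma\in F(v)}\frac1{|\sigma|}$. A prism (resp. antiprism) of order $N$ is the planar graph with $2N$ vertices, two $N$-faces and $N$ quadrilaterals (resp. $2N$ triangles), each vertex incident to two quadrilaterals and one $N$-face (resp. three triangles and one $N$-face). A planar PCC graph is such a $G$ with $K(v)>0$, $\deg(v)\ge3$ for all $v$, not a prism or antiprism. *)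

(* Plane graphs are encoded as combinatorial maps (rotation
   systems): darts D, vertex map vert : D -> V, edge involution alpha,
   vertex rotation sigma; faces are the orbits of phi := sigma \o alpha. *)
From HB Require Import structures.
From mathcomp Require Import all_boot all_order all_algebra.
Set Implicit Arguments. Unset Strict Implicit. Unset Printing Implicit Defensive.
Import Order.TTheory GRing.Theory Num.Theory.

Section Maps.
Variables (D V : finType) (vert : D -> V) (alpha sigma : D -> D).

(* face successor: follow the dart d to its head, then turn to the next dart *)
Definition face_perm (d : D) : D := sigma (alpha d).

Definition madj : rel V :=
  fun u w => [exists d, (vert d == u) && (vert (alpha d) == w)].

(* G is a finite simple connected graph 2-cell embedded in the sphere *)
Definition simple_plane_map : Prop :=
      (forall v : V, exists d, vert d = v) /\
      (forall d, alpha (alpha d) = d) /\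
      injective sigma /\ (forall d, vert (sigma d) = vert d) /\
      (forall d d', vert d = vert d' -> fconnect sigma d d') /\
      (* simple: no loops, no multiple edges *)
      (forall d, vert (alpha d) != vert d) /\
      (forall d d', vert d = vert d' -> vert (alpha d) = vert (alpha d') -> d = d') /\
      (forall u w : V, connect madj u w) /\
      (* genus 0 (Euler's formula V - E + F = 2, with #|D| = 2E) *)
      (2 * #|V| + 2 * fcard face_perm D = #|D| + 4)%N.

Definition mdeg (v : V) : nat := #|[set d | vert d == v]|.

Definition face_len (d : D) : nat := order face_perm d.

(* multiplicity of the face of dart e in the multiset F(v):
   the number of corners of v lying on that face *)
Definition face_mult (v : V) (e : D) : nat :=
  #|[set d | (vert d == v) && fconnect face_perm e d]|.

Local Open Scope ring_scope.
Definition curvature (v : V) : rat :=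
  1 - (mdeg v)%:R / 2%:R + \sum_(d | vert d == v) ((face_len d)%:R)^-1.

End Maps.

(* the prism graph of order N: C_N x K_2 on 'I_N * bool *)
Definition cyc_adj (N : nat) (i j : 'I_N) : bool :=
  (val j == (val i).+1 %% N) || (val i == (val j).+1 %% N).

Definition prism_adj (N : nat) : rel ('I_N * bool) :=
  fun x y => (cyc_adj x.1 y.1 && (x.2 == y.2)) || ((x.1 == y.1) && (x.2 != y.2)).

Definition antiprism_adj (N : nat) : rel ('I_N * bool) :=
  fun x y =>
    (cyc_adj x.1 y.1 && (x.2 == y.2))
    || ((x.2 != y.2) &&
        let (a, b) := if x.2 then (y.1, x.1) else (x.1, y.1) in
        (* a is on the false-cycle, b on the true-cycle *)
        (val b == val a) || (val b == (val a).+1 %% N)).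

Definition is_prism (D V : finType) (vert : D -> V) (alpha : D -> D) : Prop :=
  exists N (f : V -> 'I_N * bool), [/\ (3 <= N)%N, bijective f &
    forall u w, madj vert alpha u w = prism_adj (f u) (f w)].

Definition is_antiprism (D V : finType) (vert : D -> V) (alpha : D -> D) : Prop :=
  exists N (f : V -> 'I_N * bool), [/\ (3 <= N)%N, bijective f &
    forall u w, madj vert alpha u w = antiprism_adj (f u) (f w)].

Definition planar_PCC (D V : finType) (vert : D -> V) (alpha sigma : D -> D) : Prop :=
  [/\ simple_plane_map vert alpha sigma,
      (forall v, (0 < curvature vert alpha sigma v)%R),
      (forall v, 3 <= mdeg vert v)%N,
      ~ is_prism vert alpha &
      ~ is_antiprism vert alpha].

From HB Require Import structures.
From mathcomp Require Import all_boot all_order all_algebra.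
From mathcomp Require Import zify ring lra.
Set Implicit Arguments. Unset Strict Implicit. Unset Printing Implicit Defensive.
Import Order.TTheory GRing.Theory Num.Theory.

(* Since the map is simple, the boundary walk never returns to a vertex
   within two steps, so the two corners of v on the face are at least three
   steps apart in both directions: the face has length L >= 6, and L = 6
   forces deg v >= 4.  Bounding each of the other deg v - 2 corners by 1/3,
   0 < K(v) <= 2/L - (deg v - 2)/6, i.e. L (deg v - 2) < 12; with deg v >= 3
   this leaves deg v = 3 and 7 <= L <= 11. *)

Lemma two_corner_curvature_pos (N L : nat) :
  (0 < L)%N -> (2 <= N)%N ->
  (0 < 1 - N%:R / 2%:R + 2%:R / L%:R + (N - 2)%:R / 3%:R :> rat)%R ->
  (L * (N - 2) < 12)%N.
Proof.
case: N => [|[|n]] // L_gt0 _; rewrite subSS subSS subn0 -addn2 natrD.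
rewrite -(ltr_nat rat) natrM.
have l_gt0 : (0 < L%:R :> rat)%R by rewrite ltr0n.
have -> : (1 - (n%:R + 2%:R) / 2%:R + 2%:R / L%:R + n%:R / 3%:R
          = (12%:R - L%:R * n%:R) * (6%:R * L%:R)^-1 :> rat)%R.
  by field; rewrite gt_eqF.
rewrite pmulr_lgt0 ?invr_gt0 ?mulr_gt0 //.
lra.
Qed.

Section FaceWalks.
Variables (D V : finType) (vert : D -> V) (alpha sigma : D -> D).
Hypothesis alphaK : involutive alpha.
Hypothesis sigma_inj : injective sigma.
Hypothesis vert_sigma : forall d, vert (sigma d) = vert d.
Hypothesis sigma_transitive : forall d d', vert d = vert d' -> fconnect sigma d d'.
Hypothesis vert_alpha_neq : forall d, vert (alpha d) != vert d.
Hypothesis vert_alpha_inj :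
  forall d d', vert d = vert d' -> vert (alpha d) = vert (alpha d') -> d = d'.
Hypothesis mdeg_gt1 : forall v, (1 < mdeg vert v)%N.

Local Notation phi := (face_perm alpha sigma).

Lemma face_perm_inj : injective phi.
Proof. by move=> x y /sigma_inj/(congr1 alpha); rewrite !alphaK. Qed.

Lemma vert_face_perm d : vert (phi d) = vert (alpha d).
Proof. exact: vert_sigma. Qed.

Lemma sigma_fixfree d : sigma d != d.
Proof.
apply/eqP => sigma_d.
suff : (mdeg vert (vert d) <= 1)%N by rewrite leqNgt mdeg_gt1.
rewrite /mdeg -(cards1 d); apply/subset_leq_card/subsetP => d'.
rewrite !inE => /eqP/esym/sigma_transitive/iter_findex <-.
by rewrite iter_fix.
Qed.

Lemma vert_face_perm_neq d : vert (phi d) != vert d.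
Proof. by rewrite vert_face_perm vert_alpha_neq. Qed.

(* A 2-cycle of phi would give two parallel edges alpha d and phi d. *)
Lemma vert_face_perm2_neq d : vert (phi (phi d)) != vert d.
Proof.
apply/eqP => vert_phi2.
have phi_d : phi d = alpha d.
  by apply: vert_alpha_inj; rewrite ?vert_face_perm // alphaK -vert_face_perm.
by move: (sigma_fixfree (alpha d)); rewrite -[sigma _]/(phi d) phi_d eqxx.
Qed.

Lemma face_perm2_neq_alpha d : phi (phi d) != alpha d.
Proof.
by apply: contraNneq (vert_face_perm_neq (phi d)) => ->; rewrite vert_face_perm.
Qed.

Lemma vert_iter_face_perm_neq k d : (0 < k < 3)%N -> vert (iter k phi d) != vert d.
Proof.
by case: k => [|[|[|k]]] //= _; [apply: vert_face_perm_neq | apply: vert_face_perm2_neq].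
Qed.

Lemma face_len_ge3 d : (3 <= face_len alpha sigma d)%N.
Proof.
rewrite leqNgt; apply/negP => small.
have := @vert_iter_face_perm_neq (order phi d) d.
by rewrite (iter_order face_perm_inj) eqxx order_gt0 small => /(_ isT).
Qed.

Lemma face_len_fconnect d d' :
  fconnect phi d d' -> face_len alpha sigma d' = face_len alpha sigma d.
Proof.
move=> dd'; apply: (eq_order_cycle (cycle_orbit face_perm_inj d)).
  exact: in_orbit.
by rewrite -fconnect_orbit.
Qed.

Lemma findex_repeated_corner d d' :
  d != d' -> vert d' = vert d -> fconnect phi d d' ->
  (3 <= findex phi d d' <= face_len alpha sigma d - 3)%N.
Proof.
move=> dd' vert_d' conn; set k := findex phi d d'.
have k_lt : (k < face_len alpha sigma d)%N by apply: findex_max.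
have k_gt0 : (0 < k)%N by rewrite lt0n findex_eq0.
have d'E : iter k phi d = d' by apply: iter_findex.
have back : iter (face_len alpha sigma d - k) phi d' = d.
  by rewrite -d'E -iterD subnK ?(iter_order face_perm_inj) // ltnW.
have := @vert_iter_face_perm_neq k d; rewrite d'E vert_d' eqxx k_gt0 /= => gap1.
have := @vert_iter_face_perm_neq (face_len alpha sigma d - k) d'.
rewrite back vert_d' eqxx subn_gt0 k_lt /= => gap2.
by apply/andP; split; lia.
Qed.

Lemma face_len_repeated_corner d d' :
  d != d' -> vert d' = vert d -> fconnect phi d d' ->
  (6 <= face_len alpha sigma d)%N.
Proof. by move=> dd' vd' conn; have := findex_repeated_corner dd' vd' conn; lia. Qed.

(* Witnesses: d, phi^3 d, and the darts alpha (phi^2 d), alpha (phi^5 d)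
   preceding them in the rotation at the vertex of d. *)
Lemma mdeg_hexagon_repeated_corner d :
  face_len alpha sigma d = 6 -> vert (iter 3 phi d) = vert d ->
  (4 <= mdeg vert (vert d))%N.
Proof.
move=> len6 vert_d3.
have idx i : (i < 6)%N -> findex phi d (iter i phi d) = i.
  by rewrite -len6; apply: findex_iter.
have d6 : iter 6 phi d = d by rewrite -len6 (iter_order face_perm_inj).
set a := alpha (iter 2 phi d); set b := alpha (iter 5 phi d).
have vert_a : vert a = vert d by rewrite -vert_face_perm.
have vert_b : vert b = vert d by rewrite -vert_face_perm -[in RHS]d6.
have sigma_a : sigma a = iter 3 phi d by [].
have sigma_b : sigma b = d by rewrite -[in RHS]d6.
have d_d3 : d != iter 3 phi d.
  by apply/eqP => /(congr1 (findex phi d)); rewrite findex0 idx.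
have d2_d5 : iter 2 phi d != iter 5 phi d.
  by apply/eqP => /(congr1 (findex phi d)); rewrite !idx.
have a_d3 : a != iter 3 phi d by rewrite -sigma_a eq_sym sigma_fixfree.
have b_d : b != d by rewrite -{1}sigma_b eq_sym sigma_fixfree.
have a_d : a != d.
  apply: contraNneq (face_perm2_neq_alpha d) => /(congr1 alpha) <-.
  by rewrite /a alphaK.
have b_d3 : b != iter 3 phi d.
  apply: contraNneq (face_perm2_neq_alpha (iter 3 phi d)) => /(congr1 alpha) <-.
  by rewrite /b alphaK.
have a_b : a != b by apply: contra_neq d2_d5 => /(can_inj alphaK).
have uniq4 : uniq [:: d; iter 3 phi d; a; b].
  rewrite /= !inE !negb_or d_d3 ![d == _]eq_sym a_d b_d.
  by rewrite ![iter 3 phi d == _]eq_sym a_d3 b_d3 a_b.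
rewrite /mdeg -[4]/(size [:: d; iter 3 phi d; a; b]) -(card_uniqP uniq4).
apply/subset_leq_card/subsetP => z.
by rewrite !inE => /or4P[] /eqP ->; rewrite ?vert_d3 ?vert_a ?vert_b.
Qed.

Lemma curvature_le_face_mult v d :
  (curvature vert alpha sigma v <= 1 - (mdeg vert v)%:R / 2%:R
     + (face_mult vert alpha sigma v d)%:R / (face_len alpha sigma d)%:R
     + (mdeg vert v - face_mult vert alpha sigma v d)%:R / 3%:R :> rat)%R.
Proof.
set m := face_mult _ _ _ v d; set L := face_len _ _ d.
have mdegE :
    mdeg vert v = (m + #|[set d' | (vert d' == v) && ~~ fconnect phi d d']|)%N.
  rewrite /mdeg /m /face_mult -(cardsID [set d' | fconnect phi d d']).
  by congr (_ + _)%N; apply: eq_card => d'; rewrite !inE // andbC.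
rewrite /curvature -!addrA !lerD2l (bigID (fconnect phi d)) /=.
apply: lerD.
  rewrite (eq_bigr (fun=> L%:R^-1)%R) => [|d' /andP[_ /face_len_fconnect ->]] //.
  by rewrite sumr_const mulr_natl /m /face_mult cardsE.
apply: (@le_trans _ _ (\sum_(i | (vert i == v) && ~~ fconnect phi d i) 3%:R^-1)%R).
  apply: ler_sum => i _.
  by rewrite lef_pV2 ?posrE ?ltr0n ?ler_nat ?face_len_ge3 ?order_gt0.
by rewrite sumr_const mdegE addKn mulr_natl cardsE.
Qed.

Lemma face_len_double_corner v e :
  (2 < mdeg vert v)%N -> (0 < curvature vert alpha sigma v)%R ->
  face_mult vert alpha sigma v e = 2 ->
  (7 <= face_len alpha sigma e <= 11)%N.
Proof.
move=> mdeg_gt2 K_pos mult2.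
have /card_gt1P[d [d' [dP d'P dd']]] : (1 < face_mult vert alpha sigma v e)%N.
  by rewrite mult2.
move: dP d'P; rewrite !inE => /andP[/eqP vert_d ed] /andP[/eqP vert_d' ed'].
have vert_dd' : vert d' = vert d by rewrite vert_d vert_d'.
have dd'_conn : fconnect phi d d'.
  by apply: connect_trans _ ed'; rewrite (fconnect_sym face_perm_inj).
have len_d : face_len alpha sigma d = face_len alpha sigma e.
  exact: face_len_fconnect.
have len_ge6 := face_len_repeated_corner dd' vert_dd' dd'_conn.
have hexagon : face_len alpha sigma d = 6 -> (4 <= mdeg vert v)%N.
  move=> len6; rewrite -vert_d; apply: mdeg_hexagon_repeated_corner => //.
  have /andP[idx_ge3 idx_le3] := findex_repeated_corner dd' vert_dd' dd'_conn.
  have idx3 : findex phi d d' = 3 by move: idx_le3; rewrite len6; lia.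
  by rewrite -idx3 iter_findex.
have := lt_le_trans K_pos (curvature_le_face_mult v e); rewrite mult2.
move=> /two_corner_curvature_pos; rewrite order_gt0 (ltnW mdeg_gt2) => /(_ isT isT).
rewrite -len_d in len_ge6 hexagon *; nia.
Qed.

End FaceWalks.

Theorem corollary2p3 (D V : finType) (vert : D -> V) (alpha sigma : D -> D)
  (hG : planar_PCC vert alpha sigma) (v : V) (e : D)
  (hmult : face_mult vert alpha sigma v e = 2%N) :
  (7 <= face_len alpha sigma e <= 11)%N.
Proof.
case: hG => -[_ [alphaK [sigma_inj [vert_sigma [sigma_transitive
  [vert_alpha_neq [vert_alpha_inj _]]]]]]] K_pos mdeg_ge3 _ _.
have mdeg_gt1 u : (1 < mdeg vert u)%N by apply: leq_trans (mdeg_ge3 u).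
exact: (face_len_double_corner alphaK sigma_inj vert_sigma sigma_transitive
  vert_alpha_neq vert_alpha_inj mdeg_gt1 (mdeg_ge3 v) (K_pos v) hmult).
Qed.
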